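(* Let $W=(w_{ij})_{i,j=1}^m$ be symmetric with nonnegative entries, and let $\lambda\ge0$, $\sigma\ge0$, $c\in\mathbb{R}^m$. Define $$F(u)=\frac{\lambda}{2}\sum_{i,j=1}^m w_{ij}|u_i-u_j|+\langle u,c\rangle+\sigma\max_iu_i.$$ Then: 1. Duality: $$\min_{u\in\mathbb{R}^m_+}\Big(F(u)+\tfrac12\|u\|_2^2\Big)=-\min_{\substack{\alpha\in\mathbb{R}^{m\times m},\ \|\alpha\|_\infty\le1,\ \alpha_{ij}=-\alpha_{ji}}}\ \min_{v\in S_m}\ \frac12\Big\|P_{\mathbb{R}^m_+}\Big(-c-\tfrac{\lambda}{2}A\alpha-\sigma v\Big)\Big\|_2^2.$$ 2. If $(\alpha^*,v^* )$ attains the minimum on the right, then $u^*=P_{\mathbb{R}^m_+}\big(-c-\frac{\lambda}{2}A\alpha^*-\sigma v^*\big)$ is the unique minimizer of $F(u)+\frac12\|u\|_2^2$ over $\mathbb{R}^m_+$. 3. If $u^*\ne0$, then $u^*/\|u^*\|_2$ minimizes $F$ over $\{u\in\mathbb{R}^m_+:\|u\|_2\le1\}$. If $u^*=0$, then $0$ is such a minimizer.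
   Context: Notation used in the statement: - $(A\alpha)_i:=\sum_j w_{ij}(\alpha_{ij}-\alpha_{ji})$. - $\|\alpha\|_\infty=\max_{i,j}|\alpha_{ij}|$. - $P_{\mathbb{R}^m_+}$ is the Euclidean projection onto the nonnegative orthant (componentwise positive part). - $S_m=\{v\in\mathbb{R}^m: v_i\ge0,\ \sum_iv_i=1\}$ is the probability simplex. *)

(* classical reals. Vectors in R^m are functions nat -> R,
   only the entries with index < m are relevant (indices 0..m-1). *)
From Stdlib Require Import Reals Lra Lia.
Open Scope R_scope.

Fixpoint rsum (m : nat) (f : nat -> R) : R :=
  match m with
  | O => 0
  | S k => rsum k f + f k
  end.

Fixpoint vmax_aux (k : nat) (u : nat -> R) : R :=
  match k with
  | O => u O
  | S k' => Rmax (vmax_aux k' u) (u (S k'))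
  end.

(* max_{i < m} u_i  (meaningful for m >= 1) *)
Definition vmax (m : nat) (u : nat -> R) : R := vmax_aux (Nat.pred m) u.

Definition sqnorm (m : nat) (u : nat -> R) : R := rsum m (fun i => u i ^ 2).
Definition norm2 (m : nat) (u : nat -> R) : R := sqrt (sqnorm m u).

Definition nonneg_vec (m : nat) (u : nat -> R) : Prop :=
  forall i, (i < m)%nat -> 0 <= u i.

Definition simplex (m : nat) (v : nat -> R) : Prop :=
  nonneg_vec m v /\ rsum m v = 1.

Definition projpos (u : nat -> R) : nat -> R := fun i => Rmax (u i) 0.

Definition Aop (m : nat) (w : nat -> nat -> R) (a : nat -> nat -> R) : nat -> R :=
  fun i => rsum m (fun j => w i j * (a i j - a j i)).

Definition dual_feasible (m : nat) (a : nat -> nat -> R) : Prop :=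
  forall i j, (i < m)%nat -> (j < m)%nat ->
    Rabs (a i j) <= 1 /\ a i j = - a j i.

Definition Fobj (m : nat) (w : nat -> nat -> R) (lam sigma : R) (c : nat -> R)
  (u : nat -> R) : R :=
  lam / 2 * rsum m (fun i => rsum m (fun j => w i j * Rabs (u i - u j)))
  + rsum m (fun i => u i * c i) + sigma * vmax m u.

Definition Gobj (m : nat) (w : nat -> nat -> R) (lam sigma : R) (c : nat -> R)
  (u : nat -> R) : R :=
  Fobj m w lam sigma c u + / 2 * sqnorm m u.

Definition dual_point (m : nat) (w : nat -> nat -> R) (lam sigma : R) (c : nat -> R)
  (a : nat -> nat -> R) (v : nat -> R) : nat -> R :=
  projpos (fun i => - c i - lam / 2 * Aop m w a i - sigma * v i).

Definition Dobj (m : nat) (w : nat -> nat -> R) (lam sigma : R) (c : nat -> R)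
  (a : nat -> nat -> R) (v : nat -> R) : R :=
  / 2 * sqnorm m (dual_point m w lam sigma c a v).

Definition ball_min (m : nat) (w : nat -> nat -> R) (lam sigma : R) (c : nat -> R)
  (x : nat -> R) : Prop :=
  (nonneg_vec m x /\ norm2 m x <= 1) /\
  forall u, nonneg_vec m u -> norm2 m u <= 1 ->
    Fobj m w lam sigma c x <= Fobj m w lam sigma c u.

From Pilot Require Import Defs.
From Stdlib Require Import Reals Lra Lia FunctionalExtensionality.
Open Scope R_scope.

(* [F] is the support function of the compact convex set
   [K = {c + lam/2 A alpha + sigma v | alpha dual feasible, v in S_m}], the maximum being
   attained at [alpha_ij = sgn (u_i - u_j)] and [v] the indicator of an argmax of [u].
   For [u >= 0] and [g in K] the pointwise Fenchel-Young inequality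
   [u_i g_i + u_i^2/2 + ((-g_i)_+)^2/2 >= 0], with equality iff [u_i = (-g_i)_+], gives weak
   duality [F u + ||u||^2/2 >= -||(-g)_+||^2/2] and identifies the only possible primal
   minimizer. The dual minimum is attained by compactness; at a minimizer [g0] the first-order
   condition along segments of [K] reads [<u0, g - g0> <= 0] for [u0 = (-g0)_+], hence
   [F u0 = <u0, g0>] and the duality gap closes. Finally, minimality of [u0] along the rays
   [t u0] and [t u] gives [F u0 = -||u0||^2] and [F u >= -||u0||] on the unit ball. *)

(** * Finite sums and maxima *)

Lemma rsum_ext m f g : (forall i, (i < m)%nat -> f i = g i) -> rsum m f = rsum m g.
Proof.
  induction m as [|m IH]; simpl; intros H; [reflexivity|].
  rewrite IH, (H m); [reflexivity | lia | intros; apply H; lia].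
Qed.

Lemma rsum_plus m f g : rsum m (fun i => f i + g i) = rsum m f + rsum m g.
Proof. induction m as [|m IH]; simpl; [lra | rewrite IH; ring]. Qed.

Lemma rsum_minus m f g : rsum m (fun i => f i - g i) = rsum m f - rsum m g.
Proof. induction m as [|m IH]; simpl; [lra | rewrite IH; ring]. Qed.

Lemma rsum_scal m a f : rsum m (fun i => a * f i) = a * rsum m f.
Proof. induction m as [|m IH]; simpl; [lra | rewrite IH; ring]. Qed.

Lemma rsum_const0 m : rsum m (fun _ => 0) = 0.
Proof. induction m as [|m IH]; simpl; [lra | rewrite IH; ring]. Qed.

Lemma rsum_le m f g : (forall i, (i < m)%nat -> f i <= g i) -> rsum m f <= rsum m g.
Proof.
  induction m as [|m IH]; simpl; intros H; [lra|].
  assert (rsum m f <= rsum m g) by (apply IH; intros; apply H; lia).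
  assert (f m <= g m) by (apply H; lia). lra.
Qed.

Lemma rsum_nonneg m f : (forall i, (i < m)%nat -> 0 <= f i) -> 0 <= rsum m f.
Proof. intros H. rewrite <- (rsum_const0 m). apply rsum_le, H. Qed.

Lemma rsum_ge_term m f k : (forall i, (i < m)%nat -> 0 <= f i) -> (k < m)%nat ->
  f k <= rsum m f.
Proof.
  induction m as [|m IH]; simpl; intros H Hk; [lia|].
  assert (0 <= rsum m f) by (apply rsum_nonneg; intros; apply H; lia).
  assert (0 <= f m) by (apply H; lia).
  destruct (Nat.eq_dec k m) as [->|Hne]; [lra|].
  assert (f k <= rsum m f) by (apply IH; [intros; apply H|]; lia). lra.
Qed.

Lemma rsum_eq0_nonneg m f : (forall i, (i < m)%nat -> 0 <= f i) -> rsum m f <= 0 ->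
  forall i, (i < m)%nat -> f i = 0.
Proof.
  intros H Hs i Hi. pose proof (rsum_ge_term m f i H Hi). pose proof (H i Hi). lra.
Qed.

Lemma rsum_swap m n f :
  rsum m (fun i => rsum n (fun j => f i j)) = rsum n (fun j => rsum m (fun i => f i j)).
Proof.
  induction m as [|m IH]; simpl; [symmetry; apply rsum_const0|].
  rewrite IH, <- rsum_plus. reflexivity.
Qed.

Lemma rsum_delta m k a : (k < m)%nat ->
  rsum m (fun i => if Nat.eq_dec i k then a else 0) = a.
Proof.
  induction m as [|m IH]; simpl; intros Hk; [lia|].
  destruct (Nat.eq_dec m k) as [->|Hne].
  - rewrite (rsum_ext k _ (fun _ => 0)), rsum_const0; [ring|].
    intros i Hi. destruct (Nat.eq_dec i k); [lia | reflexivity].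
  - rewrite IH by lia. ring.
Qed.

Lemma vmax_aux_ge n u i : (i <= n)%nat -> u i <= vmax_aux n u.
Proof.
  induction n as [|n IH]; simpl; intros H.
  - replace i with 0%nat by lia. lra.
  - destruct (Nat.eq_dec i (S n)) as [->|Hne]; [apply Rmax_r|].
    eapply Rle_trans; [apply IH; lia | apply Rmax_l].
Qed.

Lemma vmax_aux_attained n u : exists i, (i <= n)%nat /\ vmax_aux n u = u i.
Proof.
  induction n as [|n [i [Hi He]]]; simpl; [exists 0%nat; auto|].
  unfold Rmax. destruct Rle_dec; [exists (S n) | exists i]; auto.
Qed.

Lemma vmax_aux_scale n u t : 0 <= t ->
  vmax_aux n (fun i => t * u i) = t * vmax_aux n u.
Proof.
  induction n as [|n IH]; simpl; intros Ht; [reflexivity|].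
  rewrite IH by exact Ht. apply RmaxRmult, Ht.
Qed.

Lemma vmax_ge m u i : (i < m)%nat -> u i <= vmax m u.
Proof. intros. apply vmax_aux_ge. lia. Qed.

Lemma vmax_attained m u : (0 < m)%nat -> exists i, (i < m)%nat /\ vmax m u = u i.
Proof.
  intros Hm. destruct (vmax_aux_attained (Nat.pred m) u) as [i [Hi He]].
  exists i. split; [lia | exact He].
Qed.

Lemma vmax_scale m u t : 0 <= t -> vmax m (fun i => t * u i) = t * vmax m u.
Proof. apply vmax_aux_scale. Qed.

(** * Weak and strong duality *)

Definition ip m (u g : nat -> R) : R := rsum m (fun i => u i * g i).

Lemma ip_le_vmax m u v : simplex m v -> ip m u v <= vmax m u.
Proof.
  intros [Hv Hv1]. unfold ip.
  apply Rle_trans with (rsum m (fun i => vmax m u * v i)).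
  - apply rsum_le; intros i Hi. apply Rmult_le_compat_r; [apply Hv | apply vmax_ge]; exact Hi.
  - rewrite rsum_scal, Hv1. lra.
Qed.

Definition sgn (x : R) : R := if Rlt_dec 0 x then 1 else if Rlt_dec x 0 then -1 else 0.

Lemma sgn_abs_le1 x : Rabs (sgn x) <= 1.
Proof.
  unfold sgn, Rabs. destruct Rlt_dec; [|destruct Rlt_dec]; destruct Rcase_abs; lra.
Qed.

Lemma sgn_opp x : sgn (- x) = - sgn x.
Proof.
  unfold sgn. destruct (Rlt_dec 0 x), (Rlt_dec x 0), (Rlt_dec 0 (- x)), (Rlt_dec (- x) 0); lra.
Qed.

Lemma sgn_mul_self x : sgn x * x = Rabs x.
Proof.
  unfold sgn, Rabs. destruct (Rlt_dec 0 x), (Rlt_dec x 0), Rcase_abs; lra.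
Qed.

(* Summed gaps [f u + f^* (-g) + u g] for [f u = u^2/2] on [u >= 0], [f^* s = (s_+)^2/2]. *)
Definition fenchel_gap m (u g : nat -> R) : R :=
  rsum m (fun i => u i * g i + / 2 * u i ^ 2 + / 2 * Rmax (- g i) 0 ^ 2).

Lemma fenchel_gap_nonneg m u g : nonneg_vec m u -> 0 <= fenchel_gap m u g.
Proof.
  intros Hu. apply rsum_nonneg. intros i Hi. specialize (Hu i Hi).
  pose proof (pow2_ge_0 (u i + g i)). unfold Rmax. destruct Rle_dec; nra.
Qed.

Lemma fenchel_gap_eq0 m u g : nonneg_vec m u -> fenchel_gap m u g <= 0 ->
  forall i, (i < m)%nat -> u i = Rmax (- g i) 0.
Proof.
  intros Hu Hgap i Hi.
  assert (Hterm : forall j, (j < m)%nat ->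
            0 <= u j * g j + / 2 * u j ^ 2 + / 2 * Rmax (- g j) 0 ^ 2).
  { intros j Hj. specialize (Hu j Hj).
    pose proof (pow2_ge_0 (u j + g j)). unfold Rmax. destruct Rle_dec; nra. }
  pose proof (rsum_eq0_nonneg m _ Hterm Hgap i Hi) as H0. specialize (Hu i Hi).
  unfold Rmax in *. destruct Rle_dec.
  - assert (0 <= u i * g i) by (apply Rmult_le_pos; lra).
    assert (u i * u i = 0) by nra. destruct (Rmult_integral _ _ H1); lra.
  - assert ((u i + g i) * (u i + g i) = 0) by nra.
    destruct (Rmult_integral _ _ H); lra.
Qed.

Lemma fenchel_gap_pos_part m g : fenchel_gap m (fun i => Rmax (- g i) 0) g = 0.
Proof.
  unfold fenchel_gap. transitivity (rsum m (fun _ => 0)); [|apply rsum_const0].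
  apply rsum_ext; intros i _.
  unfold Rmax. destruct Rle_dec; field.
Qed.

Lemma pos_part_sq_le p h : Rmax (p + h) 0 ^ 2 <= Rmax p 0 ^ 2 + 2 * h * Rmax p 0 + h ^ 2.
Proof.
  unfold Rmax. destruct (Rle_dec (p + h) 0), (Rle_dec p 0); nra.
Qed.

Lemma nonpos_of_le_small_multiples s K : (forall t, 0 < t <= 1 -> s <= t * K) -> s <= 0.
Proof.
  intros H. destruct (Rle_dec s 0) as [|Hs]; [assumption|]. apply Rnot_le_lt in Hs.
  destruct (Rle_dec K 0) as [HK|HK].
  - specialize (H 1 ltac:(lra)). lra.
  - apply Rnot_le_lt in HK.
    assert (Ht : 0 < s / (s + K) <= 1).
    { split; [apply Rdiv_lt_0_compat; lra|].
      apply Rmult_le_reg_r with (s + K); [lra|]. field_simplify; lra. }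
    specialize (H _ Ht).
    assert (s / (s + K) * K < s).
    { apply Rmult_lt_reg_r with (s + K); [lra|]. field_simplify; nra. }
    lra.
Qed.

Lemma dual_feasible_comb m a a' t : 0 <= t <= 1 -> dual_feasible m a -> dual_feasible m a' ->
  dual_feasible m (fun i j => a i j + t * (a' i j - a i j)).
Proof.
  intros Ht Ha Ha' i j Hi Hj.
  destruct (Ha i j Hi Hj) as [Habs Hanti], (Ha' i j Hi Hj) as [Habs' Hanti'].
  split; [|rewrite Hanti, Hanti'; ring].
  replace (a i j + t * (a' i j - a i j)) with ((1 - t) * a i j + t * a' i j) by ring.
  eapply Rle_trans; [apply Rabs_triang|]. rewrite !Rabs_mult.
  rewrite (Rabs_pos_eq (1 - t)), (Rabs_pos_eq t) by lra. nra.
Qed.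

Lemma simplex_comb m v v' t : 0 <= t <= 1 -> simplex m v -> simplex m v' ->
  simplex m (fun i => v i + t * (v' i - v i)).
Proof.
  intros Ht [Hv Hv1] [Hv' Hv1']. split.
  - intros i Hi. specialize (Hv i Hi). specialize (Hv' i Hi). nra.
  - rewrite rsum_plus, rsum_scal, rsum_minus, Hv1, Hv1'. ring.
Qed.

Section Duality.

Variables (m : nat) (w : nat -> nat -> R) (lam sigma : R) (c : nat -> R).
Hypothesis Hsym : forall i j, (i < m)%nat -> (j < m)%nat -> w i j = w j i.
Hypothesis Hwnn : forall i j, (i < m)%nat -> (j < m)%nat -> 0 <= w i j.
Hypothesis Hlam : 0 <= lam.
Hypothesis Hsigma : 0 <= sigma.

Local Notation F := (Fobj m w lam sigma c).
Local Notation G := (Gobj m w lam sigma c).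
Local Notation D := (Dobj m w lam sigma c).
Local Notation dual_point := (dual_point m w lam sigma c).

Definition dual_grad (a : nat -> nat -> R) (v : nat -> R) : nat -> R :=
  fun i => c i + lam / 2 * Aop m w a i + sigma * v i.

Definition dual_min (a0 : nat -> nat -> R) (v0 : nat -> R) : Prop :=
  dual_feasible m a0 /\ simplex m v0 /\
  forall a v, dual_feasible m a -> simplex m v -> D a0 v0 <= D a v.

Definition primal_min (x0 : nat -> R) : Prop :=
  nonneg_vec m x0 /\ forall u, nonneg_vec m u -> G x0 <= G u.

Lemma dual_point_E a v i : dual_point a v i = Rmax (- dual_grad a v i) 0.
Proof. unfold Defs.dual_point, projpos, dual_grad. f_equal. ring. Qed.

Lemma Dobj_E a v : D a v = / 2 * rsum m (fun i => Rmax (- dual_grad a v i) 0 ^ 2).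
Proof.
  unfold Dobj, sqnorm. f_equal. apply rsum_ext; intros i _. rewrite dual_point_E. reflexivity.
Qed.

Lemma ip_Aop u a :
  ip m u (Aop m w a) = rsum m (fun i => rsum m (fun j => w i j * a i j * (u i - u j))).
Proof.
  unfold ip, Aop.
  transitivity (rsum m (fun i => rsum m (fun j => u i * w i j * a i j))
              - rsum m (fun i => rsum m (fun j => u i * w i j * a j i))).
  { rewrite <- rsum_minus. apply rsum_ext; intros i _.
    rewrite <- rsum_scal, <- rsum_minus. apply rsum_ext; intros; ring. }
  rewrite (rsum_swap m m (fun i j => u i * w i j * a j i)), <- rsum_minus.
  apply rsum_ext; intros i Hi. rewrite <- rsum_minus. apply rsum_ext; intros j Hj.
  rewrite (Hsym j i) by assumption. ring.
Qed.

Lemma ip_dual_grad u a v :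
  ip m u (dual_grad a v) =
  ip m u c + lam / 2 * rsum m (fun i => rsum m (fun j => w i j * a i j * (u i - u j)))
  + sigma * ip m u v.
Proof.
  rewrite <- ip_Aop. unfold ip, dual_grad.
  rewrite <- !rsum_scal, <- !rsum_plus. apply rsum_ext; intros; ring.
Qed.

Lemma Fobj_ge_ip u a v : dual_feasible m a -> simplex m v -> ip m u (dual_grad a v) <= F u.
Proof.
  intros Ha Hv. rewrite ip_dual_grad. unfold Fobj, ip at 1.
  assert (Hpair : rsum m (fun i => rsum m (fun j => w i j * a i j * (u i - u j)))
                  <= rsum m (fun i => rsum m (fun j => w i j * Rabs (u i - u j)))).
  { apply rsum_le; intros i Hi; apply rsum_le; intros j Hj.
    rewrite Rmult_assoc. apply Rmult_le_compat_l; [apply Hwnn; assumption|].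
    destruct (Ha i j Hi Hj) as [Habs _].
    apply Rle_trans with (Rabs (a i j * (u i - u j))); [apply RRle_abs|].
    rewrite Rabs_mult. pose proof (Rabs_pos (u i - u j)). nra. }
  pose proof (ip_le_vmax m u v Hv) as Hvmax.
  assert (Hlam2 : 0 <= lam / 2) by lra.
  pose proof (Rmult_le_compat_l _ _ _ Hlam2 Hpair).
  pose proof (Rmult_le_compat_l _ _ _ Hsigma Hvmax).
  lra.
Qed.

Lemma Fobj_attained u : (0 < m)%nat ->
  exists a v, dual_feasible m a /\ simplex m v /\ F u = ip m u (dual_grad a v).
Proof.
  intros Hm. destruct (vmax_attained m u Hm) as [k [Hk Hmax]].
  exists (fun i j => sgn (u i - u j)), (fun i => if Nat.eq_dec i k then 1 else 0).
  split; [|split].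
  - intros i j _ _. split; [apply sgn_abs_le1|].
    replace (u j - u i) with (- (u i - u j)) by ring. rewrite sgn_opp. ring.
  - split; [intros i _; destruct Nat.eq_dec; lra | apply rsum_delta, Hk].
  - rewrite ip_dual_grad. unfold Fobj, ip.
    rewrite (rsum_ext m (fun i => u i * (if Nat.eq_dec i k then 1 else 0))
                        (fun i => if Nat.eq_dec i k then u k else 0)),
            rsum_delta, Hmax by (assumption || (intros i _; destruct Nat.eq_dec; subst; ring)).
    rewrite (rsum_ext m (fun i => rsum m (fun j => w i j * sgn (u i - u j) * (u i - u j)))
                        (fun i => rsum m (fun j => w i j * Rabs (u i - u j)))); [ring|].
    intros i _. apply rsum_ext; intros j _. rewrite Rmult_assoc, sgn_mul_self. reflexivity.
Qed.

Lemma Gobj_plus_Dobj u a v :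
  G u + D a v = (F u - ip m u (dual_grad a v)) + fenchel_gap m u (dual_grad a v).
Proof.
  unfold Gobj. rewrite Dobj_E. unfold fenchel_gap, ip, sqnorm.
  rewrite !rsum_plus, !rsum_scal. ring.
Qed.

Lemma weak_duality u a v : nonneg_vec m u -> dual_feasible m a -> simplex m v ->
  - D a v <= G u.
Proof.
  intros Hu Ha Hv. pose proof (Gobj_plus_Dobj u a v).
  pose proof (Fobj_ge_ip u a v Ha Hv). pose proof (fenchel_gap_nonneg m u (dual_grad a v) Hu).
  lra.
Qed.

Lemma eq_dual_point_of_Gobj_le u a v : nonneg_vec m u -> dual_feasible m a -> simplex m v ->
  G u <= - D a v -> forall i, (i < m)%nat -> u i = dual_point a v i.
Proof.
  intros Hu Ha Hv HG i Hi. rewrite dual_point_E.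
  apply (fenchel_gap_eq0 m u (dual_grad a v) Hu); [|exact Hi].
  pose proof (Gobj_plus_Dobj u a v). pose proof (Fobj_ge_ip u a v Ha Hv). lra.
Qed.

Lemma dual_grad_comb a a' v v' t i :
  dual_grad (fun i j => a i j + t * (a' i j - a i j)) (fun i => v i + t * (v' i - v i)) i
  = dual_grad a v i + t * (dual_grad a' v' i - dual_grad a v i).
Proof.
  assert (HA : Aop m w (fun i j => a i j + t * (a' i j - a i j)) i
               = Aop m w a i + t * (Aop m w a' i - Aop m w a i)).
  { unfold Aop. rewrite <- rsum_minus, <- rsum_scal, <- rsum_plus. apply rsum_ext; intros; ring. }
  unfold dual_grad. rewrite HA. ring.
Qed.

Lemma Dobj_comb_le a v a' v' t :
  D (fun i j => a i j + t * (a' i j - a i j)) (fun i => v i + t * (v' i - v i))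
  <= D a v - t * ip m (dual_point a v) (fun i => dual_grad a' v' i - dual_grad a v i)
     + t ^ 2 / 2 * rsum m (fun i => (dual_grad a' v' i - dual_grad a v i) ^ 2).
Proof.
  rewrite !Dobj_E. unfold ip.
  set (g := dual_grad a v). set (d := fun i => dual_grad a' v' i - g i).
  apply Rle_trans with (/ 2 * rsum m (fun i => Rmax (- g i) 0 ^ 2
                          + 2 * (- t * d i) * Rmax (- g i) 0 + (- t * d i) ^ 2)).
  - apply Rmult_le_compat_l; [lra|]. apply rsum_le; intros i _.
    rewrite dual_grad_comb. fold g. fold (d i).
    replace (- (g i + t * d i)) with (- g i + - t * d i) by ring. apply pos_part_sq_le.
  - rewrite !rsum_plus.
    rewrite (rsum_ext m (fun i => 2 * (- t * d i) * Rmax (- g i) 0)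
                        (fun i => (-2 * t) * (dual_point a v i * d i)))
      by (intros; rewrite dual_point_E; unfold g; ring).
    rewrite (rsum_ext m (fun i => (- t * d i) ^ 2) (fun i => t ^ 2 * d i ^ 2)) by (intros; ring).
    rewrite !rsum_scal. unfold d. right. field.
Qed.

Lemma dual_min_first_order a0 v0 a v : dual_min a0 v0 -> dual_feasible m a -> simplex m v ->
  ip m (dual_point a0 v0) (fun i => dual_grad a v i - dual_grad a0 v0 i) <= 0.
Proof.
  intros [Ha0 [Hv0 Hmin]] Ha Hv.
  set (s := ip m _ _). set (K := / 2 * rsum m (fun i => (dual_grad a v i - dual_grad a0 v0 i) ^ 2)).
  apply (nonpos_of_le_small_multiples s K). intros t Ht.
  assert (Ht' : 0 <= t <= 1) by lra.
  pose proof (Hmin _ _ (dual_feasible_comb m a0 a t Ht' Ha0 Ha) (simplex_comb m v0 v t Ht' Hv0 Hv)).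
  pose proof (Dobj_comb_le a0 v0 a v t).
  apply Rmult_le_reg_l with t; [lra|]. unfold K, s in *. nra.
Qed.

Lemma dual_min_Fobj a0 v0 : (0 < m)%nat -> dual_min a0 v0 ->
  F (dual_point a0 v0) = ip m (dual_point a0 v0) (dual_grad a0 v0).
Proof.
  intros Hm Hmin. set (us := dual_point a0 v0).
  destruct (Fobj_attained us Hm) as [a [v [Ha [Hv HF]]]].
  pose proof (dual_min_first_order a0 v0 a v Hmin Ha Hv) as Hfo.
  destruct Hmin as [Ha0 [Hv0 _]].
  pose proof (Fobj_ge_ip us a0 v0 Ha0 Hv0).
  assert (Hsplit : ip m us (fun i => dual_grad a v i - dual_grad a0 v0 i)
                   = ip m us (dual_grad a v) - ip m us (dual_grad a0 v0)).
  { unfold ip. rewrite <- rsum_minus. apply rsum_ext; intros; ring. }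
  fold us in Hfo. lra.
Qed.

Lemma dual_min_strong_duality a0 v0 : (0 < m)%nat -> dual_min a0 v0 ->
  G (dual_point a0 v0) = - D a0 v0.
Proof.
  intros Hm Hmin. pose proof (Gobj_plus_Dobj (dual_point a0 v0) a0 v0) as Hsum.
  assert (Hgap : fenchel_gap m (dual_point a0 v0) (dual_grad a0 v0) = 0).
  { replace (dual_point a0 v0) with (fun i => Rmax (- dual_grad a0 v0 i) 0)
      by (apply functional_extensionality; intros; symmetry; apply dual_point_E).
    apply fenchel_gap_pos_part. }
  rewrite (dual_min_Fobj a0 v0 Hm Hmin), Hgap in Hsum. lra.
Qed.

Lemma dual_min_primal_min a0 v0 : (0 < m)%nat -> dual_min a0 v0 ->
  primal_min (dual_point a0 v0).
Proof.
  intros Hm Hmin. split.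
  - intros i _. rewrite dual_point_E. apply Rmax_r.
  - intros u Hu. rewrite (dual_min_strong_duality a0 v0 Hm Hmin).
    destruct Hmin as [Ha0 [Hv0 _]]. apply weak_duality; assumption.
Qed.

Lemma primal_min_unique a0 v0 u : (0 < m)%nat -> dual_min a0 v0 -> primal_min u ->
  forall i, (i < m)%nat -> u i = dual_point a0 v0 i.
Proof.
  intros Hm Hmin [Hu Humin].
  pose proof (dual_min_primal_min a0 v0 Hm Hmin) as [Hus _].
  pose proof (Humin _ Hus) as Hle. rewrite (dual_min_strong_duality a0 v0 Hm Hmin) in Hle.
  destruct Hmin as [Ha0 [Hv0 _]]. apply eq_dual_point_of_Gobj_le; assumption.
Qed.

End Duality.

(** * Minimizing [F] over the unit ball *)

Lemma sqnorm_nonneg m x : 0 <= sqnorm m x.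
Proof. apply rsum_nonneg; intros; apply pow2_ge_0. Qed.

Lemma sqnorm_scale m x t : sqnorm m (fun i => t * x i) = t ^ 2 * sqnorm m x.
Proof. unfold sqnorm. rewrite <- rsum_scal. apply rsum_ext; intros; ring. Qed.

Lemma sqnorm_le1 m u : norm2 m u <= 1 -> sqnorm m u <= 1.
Proof.
  unfold norm2. intros H. pose proof (sqnorm_nonneg m u).
  rewrite <- (sqrt_sqrt (sqnorm m u)) by assumption. pose proof (sqrt_pos (sqnorm m u)). nra.
Qed.

Lemma norm2_sq m x : norm2 m x ^ 2 = sqnorm m x.
Proof. unfold norm2. simpl. rewrite Rmult_1_r. apply sqrt_sqrt, sqnorm_nonneg. Qed.

Lemma norm2_pos m x : (exists i, (i < m)%nat /\ x i <> 0) -> 0 < norm2 m x.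
Proof.
  intros [k [Hk Hxk]]. apply sqrt_lt_R0.
  apply Rlt_le_trans with (x k ^ 2); [simpl; rewrite Rmult_1_r; apply Rsqr_pos_lt, Hxk|].
  apply (rsum_ge_term m (fun i => x i ^ 2)); [intros; apply pow2_ge_0 | exact Hk].
Qed.

Lemma norm2_eq0 m x : (forall i, (i < m)%nat -> x i = 0) -> norm2 m x = 0.
Proof.
  intros Hx. unfold norm2, sqnorm. rewrite <- sqrt_0. f_equal.
  transitivity (rsum m (fun _ => 0)); [|apply rsum_const0].
  apply rsum_ext; intros i Hi. rewrite Hx by exact Hi. ring.
Qed.

Lemma nonneg_vec_scale m t x : 0 <= t -> nonneg_vec m x -> nonneg_vec m (fun i => t * x i).
Proof. intros Ht Hx i Hi. apply Rmult_le_pos; auto. Qed.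

Section BallMinimizer.

Variables (m : nat) (w : nat -> nat -> R) (lam sigma : R) (c : nat -> R).

Local Notation F := (Fobj m w lam sigma c).
Local Notation G := (Gobj m w lam sigma c).

Lemma Fobj_scale x t : 0 <= t -> F (fun i => t * x i) = t * F x.
Proof.
  intros Ht. unfold Fobj. rewrite vmax_scale by exact Ht.
  rewrite (rsum_ext m (fun i => t * x i * c i) (fun i => t * (x i * c i))) by (intros; ring).
  rewrite (rsum_ext m (fun i => rsum m (fun j => w i j * Rabs (t * x i - t * x j)))
                      (fun i => t * rsum m (fun j => w i j * Rabs (x i - x j)))).
  - rewrite !rsum_scal. ring.
  - intros i _. rewrite <- rsum_scal. apply rsum_ext; intros j _.
    rewrite <- Rmult_minus_distr_l, Rabs_mult, (Rabs_pos_eq t) by exact Ht. ring.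
Qed.

Lemma Gobj_scale x t : 0 <= t -> G (fun i => t * x i) = t * F x + / 2 * t ^ 2 * sqnorm m x.
Proof. intros Ht. unfold Gobj. rewrite Fobj_scale, sqnorm_scale by exact Ht. ring. Qed.

Local Notation primal_min := (primal_min m w lam sigma c).

(* Optimality of [x0] along the ray [s |-> s x0]. *)
Lemma primal_min_Fobj x0 : primal_min x0 -> F x0 = - sqnorm m x0.
Proof.
  intros [Hx0 Hmin]. set (B := sqnorm m x0).
  assert (Hray : forall s, -1 <= s -> 0 <= s * (F x0 + B) + / 2 * s ^ 2 * B).
  { intros s Hs. specialize (Hmin _ (nonneg_vec_scale m (1 + s) x0 ltac:(lra) Hx0)).
    rewrite Gobj_scale in Hmin by lra. unfold Gobj in Hmin. fold B in Hmin. nra. }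
  assert (Hup : F x0 + B <= 0).
  { apply (nonpos_of_le_small_multiples _ (/ 2 * B)). intros t Ht.
    specialize (Hray (- t) ltac:(lra)). apply Rmult_le_reg_l with t; lra. }
  assert (Hlo : - (F x0 + B) <= 0).
  { apply (nonpos_of_le_small_multiples _ (/ 2 * B)). intros t Ht.
    specialize (Hray t ltac:(lra)). apply Rmult_le_reg_l with t; lra. }
  lra.
Qed.

(* Compare [x0] with [(r + t) u] where [r = ||x0||]. *)
Lemma primal_min_Fobj_ball x0 u : primal_min x0 -> nonneg_vec m u -> norm2 m u <= 1 ->
  - norm2 m x0 <= F u.
Proof.
  intros Hx0 Hu Hu1. pose proof (primal_min_Fobj x0 Hx0) as HF. destruct Hx0 as [Hx0 Hmin].
  set (r := norm2 m x0). assert (Hr : 0 <= r) by apply sqrt_pos.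
  pose proof (norm2_sq m x0) as Hr2. fold r in Hr2.
  pose proof (sqnorm_le1 m u Hu1). pose proof (sqnorm_nonneg m u).
  assert (Hbound : - (F u + r) <= 0).
  { apply (nonpos_of_le_small_multiples _ (/ 2)). intros t Ht.
    specialize (Hmin _ (nonneg_vec_scale m (r + t) u ltac:(lra) Hu)).
    rewrite Gobj_scale in Hmin by lra. unfold Gobj in Hmin. rewrite HF, <- Hr2 in Hmin.
    assert (Hq : (r + t) ^ 2 * sqnorm m u <= (r + t) ^ 2) by (pose proof (pow2_ge_0 (r + t)); nra).
    apply Rmult_le_reg_l with t; [lra|].
    destruct (Rle_dec 0 (F u + r)); nra. }
  lra.
Qed.

Lemma ball_min_normalized x0 : primal_min x0 -> 0 < norm2 m x0 ->
  ball_min m w lam sigma c (fun i => x0 i / norm2 m x0).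
Proof.
  intros Hx0 Hr. set (r := norm2 m x0) in *.
  pose proof (primal_min_Fobj x0 Hx0) as HF. pose proof (norm2_sq m x0) as Hr2. fold r in Hr2.
  replace (fun i => x0 i / r) with (fun i => / r * x0 i)
    by (apply functional_extensionality; intros; unfold Rdiv; ring).
  assert (Hir : 0 < / r) by (apply Rinv_0_lt_compat, Hr).
  split; [split|].
  - apply nonneg_vec_scale; [lra | apply Hx0].
  - unfold norm2. rewrite sqnorm_scale, <- Hr2.
    replace ((/ r) ^ 2 * r ^ 2) with 1 by (field; lra). rewrite sqrt_1. lra.
  - intros u Hu Hu1. rewrite Fobj_scale, HF, <- Hr2 by lra.
    replace (/ r * - r ^ 2) with (- r) by (field; lra).
    apply (primal_min_Fobj_ball x0 u Hx0 Hu Hu1).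
Qed.

Lemma ball_min_zero x0 : primal_min x0 -> norm2 m x0 = 0 -> ball_min m w lam sigma c (fun _ => 0).
Proof.
  intros Hx0 Hr.
  replace (fun _ : nat => 0) with (fun i => 0 * x0 i)
    by (apply functional_extensionality; intros; ring).
  split; [split|].
  - apply nonneg_vec_scale; [lra | apply Hx0].
  - unfold norm2. rewrite sqnorm_scale. replace (0 ^ 2 * sqnorm m x0) with 0 by ring.
    rewrite sqrt_0. lra.
  - intros u Hu Hu1. rewrite Fobj_scale by lra.
    pose proof (primal_min_Fobj_ball x0 u Hx0 Hu Hu1). lra.
Qed.

End BallMinimizer.

(** * Attainment of the dual minimum *)

From mathcomp Require all_boot all_order all_algebra.
From mathcomp Require boolp classical_sets topology normedtype derive Rstruct Rstruct_topology.

Definition box (N : nat) (z : nat -> R) : Prop := forall k, (k < N)%nat -> -1 <= z k <= 1.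

Module BoxMinimum.
Import all_boot all_order all_algebra boolp classical_sets topology normedtype derive Rstruct Rstruct_topology.
Import Order.TTheory GRing.Theory Num.Theory.
Local Open Scope ring_scope.
Local Open Scope classical_set_scope.

Definition of_row {N} (r : 'rV[R]_N) (k : nat) : R :=
  if insub k is Some i then r ord0 i else 0.

(* [of_row] pads a row vector with zeros, so [row_continuous N Phi] is continuity of [Phi]
   in its first [N] arguments. *)
Definition row_continuous N (Phi : (nat -> R) -> R) :=
  continuous (fun r : 'rV[R]_N => Phi (of_row r)).

Lemma row_continuous_const N a : row_continuous N (fun _ => a).
Proof. exact: cst_continuous. Qed.

Lemma row_continuous_coord N k : row_continuous N (fun z => z k).
Proof.
rewrite /row_continuous /of_row; case: insubP => [i _ _|_]; last exact: cst_continuous.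
exact: (@coord_continuous R 1 N ord0 i).
Qed.

Lemma row_continuous_plus N f g :
  row_continuous N f -> row_continuous N g -> row_continuous N (fun z => Rplus (f z) (g z)).
Proof. by move=> cf cg x; exact: (@continuousD R R^o _ _ _ x (cf x) (cg x)). Qed.

Lemma row_continuous_mult N f g :
  row_continuous N f -> row_continuous N g -> row_continuous N (fun z => Rmult (f z) (g z)).
Proof. by move=> cf cg x; exact: (@continuousM R _ _ _ x (cf x) (cg x)). Qed.

Lemma row_continuous_opp N f : row_continuous N f -> row_continuous N (fun z => Ropp (f z)).
Proof. by move=> cf x; exact: (@continuousN R R^o _ _ x (cf x)). Qed.

Lemma row_continuous_inv N f :
  (forall z, f z <> R0) -> row_continuous N f -> row_continuous N (fun z => Rinv (f z)).
Proof. by move=> nz cf x; apply: continuousV; [apply/eqP; exact: nz | exact: cf]. Qed.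

Lemma row_continuous_max N f g :
  row_continuous N f -> row_continuous N g -> row_continuous N (fun z => Rmax (f z) (g z)).
Proof.
move=> cf cg x.
have -> : (fun r : 'rV[R]_N => Rmax (f (of_row r)) (g (of_row r))) =
          ((fun r => f (of_row r)) \max (fun r => g (of_row r))).
  by apply: funext => r /=; rewrite RmaxE.
exact: (continuous_max (cf x) (cg x)).
Qed.

Lemma row_continuous_abs N f : row_continuous N f -> row_continuous N (fun z => Rabs (f z)).
Proof.
move=> cf.
have -> : (fun z => Rabs (f z)) = (fun z => Rmax (f z) (Ropp (f z))).
  by apply: funext => z; rewrite /Rmax /Rabs; case: Rle_dec; case: Rcase_abs => /=; lra.
by apply: row_continuous_max => //; apply: row_continuous_opp.
Qed.

Lemma box_min_exists N Phi : row_continuous N Phi ->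
  (forall z z', (forall k, (k < N)%coq_nat -> z k = z' k) -> Phi z = Phi z') ->
  exists z0, box N z0 /\ forall z, box N z -> Rle (Phi z0) (Phi z).
Proof.
move=> cPhi Phi_ext.
pose A := [set r : 'rV[R]_N | forall i, (fun _ : 'I_N => `[-1%R, 1%R]) i (r ord0 i)].
have cA : compact A by apply: rV_compact => i; exact: segment_compact.
have A0 : A !=set0 by exists 0 => i /=; rewrite mxE in_itv /= lerN10 ler01.
have [r0 Ar0 r0_min] := EVT_min_rV A0 cA (continuous_subspaceT cPhi).
have of_rowE (r : 'rV[R]_N) (i : 'I_N) : of_row r i = r ord0 i by rewrite /of_row valK.
exists (of_row r0); split.
  move=> k /ssrnat.ltP kN; rewrite -[k]/(nat_of_ord (Ordinal kN)) of_rowE.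
  by have /andP[/RleP ? /RleP ?] := set_mem Ar0 (Ordinal kN).
move=> z bz.
have -> : Phi z = Phi (of_row (\row_(i < N) z i)).
  apply: Phi_ext => k /ssrnat.ltP kN.
  by rewrite -[k]/(nat_of_ord (Ordinal kN)) of_rowE mxE.
apply/RleP; apply: r0_min; apply: mem_set => i /=.
have [? ?] := bz i (elimT ssrnat.ltP (ltn_ord i)).
by rewrite mxE in_itv /=; apply/andP; split; apply/RleP.
Qed.

End BoxMinimum.

Import BoxMinimum.

Lemma row_continuous_rsum N n f :
  (forall i, row_continuous N (f i)) -> row_continuous N (fun z => rsum n (fun i => f i z)).
Proof.
  intros Hf. induction n as [|n IH]; simpl;
    [apply row_continuous_const | apply row_continuous_plus; auto].
Qed.

Lemma row_continuous_minus N f g :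
  row_continuous N f -> row_continuous N g -> row_continuous N (fun z => f z - g z).
Proof. intros Hf Hg. apply row_continuous_plus; [|apply row_continuous_opp]; assumption. Qed.

Lemma row_continuous_div N f g : (forall z, 1 <= g z) ->
  row_continuous N f -> row_continuous N g -> row_continuous N (fun z => f z / g z).
Proof.
  intros Hg1 Hf Hg. apply row_continuous_mult; [assumption|].
  apply row_continuous_inv; [intros z; specialize (Hg1 z); lra | assumption].
Qed.

Lemma row_continuous_pow2 N f : row_continuous N f -> row_continuous N (fun z => f z ^ 2).
Proof.
  intros Hf. simpl. apply row_continuous_mult; [|apply row_continuous_mult]; auto.
  apply row_continuous_const.
Qed.

Definition subsimplex m (v : nat -> R) : Prop := nonneg_vec m v /\ rsum m v <= 1.

(* A continuous retraction of the box [[-1,1]^(m*m+m)] onto [dual_feasible m] x [subsimplex m]: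
   the first [m*m] coordinates, read row-major, give [alpha], the last [m] give [v]. *)
Definition antisym_part m (z : nat -> R) : nat -> nat -> R :=
  fun i j => (z (i * m + j)%nat - z (j * m + i)%nat) / 2.

Definition subsimplex_part m (z : nat -> R) : nat -> R :=
  fun i => Rabs (z (m * m + i)%nat) / Rmax 1 (rsum m (fun k => Rabs (z (m * m + k)%nat))).

Definition box_Dobj m w lam sigma c (z : nat -> R) : R :=
  Dobj m w lam sigma c (antisym_part m z) (subsimplex_part m z).

Lemma Dobj_ext m w lam sigma c a a' v v' :
  (forall i j, (i < m)%nat -> (j < m)%nat -> a i j = a' i j) ->
  (forall i, (i < m)%nat -> v i = v' i) ->
  Dobj m w lam sigma c a v = Dobj m w lam sigma c a' v'.
Proof.
  intros Ha Hv. unfold Dobj, sqnorm, dual_point, projpos, Aop. f_equal.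
  apply rsum_ext; intros i Hi. rewrite Hv by exact Hi.
  rewrite (rsum_ext m (fun j => w i j * (a i j - a j i)) (fun j => w i j * (a' i j - a' j i)));
    [reflexivity|].
  intros j Hj. rewrite !Ha by assumption. reflexivity.
Qed.

Lemma box_Dobj_ext m w lam sigma c z z' :
  (forall k, (k < m * m + m)%nat -> z k = z' k) ->
  box_Dobj m w lam sigma c z = box_Dobj m w lam sigma c z'.
Proof.
  intros H. apply Dobj_ext.
  - intros i j Hi Hj. unfold antisym_part. rewrite !H by nia. reflexivity.
  - intros i Hi. unfold subsimplex_part. rewrite H by nia.
    rewrite (rsum_ext m (fun k => Rabs (z (m * m + k)%nat)) (fun k => Rabs (z' (m * m + k)%nat)));
      [reflexivity|].
    intros k Hk. rewrite H by nia. reflexivity.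
Qed.

Lemma box_Dobj_continuous m w lam sigma c :
  row_continuous (m * m + m) (box_Dobj m w lam sigma c).
Proof.
  unfold box_Dobj, Dobj, sqnorm, dual_point, projpos, Aop, antisym_part, subsimplex_part.
  apply row_continuous_mult; [apply row_continuous_const|].
  apply row_continuous_rsum; intro i. apply row_continuous_pow2.
  apply row_continuous_max; [|apply row_continuous_const].
  apply row_continuous_minus; [apply row_continuous_minus; [apply row_continuous_const|] |].
  - apply row_continuous_mult; [apply row_continuous_const|].
    apply row_continuous_rsum; intro j.
    apply row_continuous_mult; [apply row_continuous_const|].
    apply row_continuous_minus; apply row_continuous_div;
      [intros; lra | | apply row_continuous_const | intros; lra | | apply row_continuous_const];
      apply row_continuous_minus; apply row_continuous_coord.
  - apply row_continuous_mult; [apply row_continuous_const|].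
    apply row_continuous_div; [intros; apply Rmax_l | |].
    + apply row_continuous_abs, row_continuous_coord.
    + apply row_continuous_max; [apply row_continuous_const|].
      apply row_continuous_rsum; intro k. apply row_continuous_abs, row_continuous_coord.
Qed.

Lemma box_retract_feasible m z : box (m * m + m) z ->
  dual_feasible m (antisym_part m z) /\ subsimplex m (subsimplex_part m z).
Proof.
  intros Hz. split.
  - intros i j Hi Hj. unfold antisym_part. split; [|field].
    pose proof (Hz (i * m + j)%nat ltac:(nia)). pose proof (Hz (j * m + i)%nat ltac:(nia)).
    unfold Rabs; destruct Rcase_abs; lra.
  - set (S := rsum m (fun k => Rabs (z (m * m + k)%nat))).
    assert (HM : 1 <= Rmax 1 S) by apply Rmax_l. assert (HS : S <= Rmax 1 S) by apply Rmax_r.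
    split.
    + intros i _. unfold subsimplex_part. fold S. apply Rmult_le_pos; [apply Rabs_pos | left; apply Rinv_0_lt_compat; lra].
    + unfold subsimplex_part, Rdiv. fold S.
      rewrite (rsum_ext m _ (fun i => / Rmax 1 S * Rabs (z (m * m + i)%nat))) by (intros; ring).
      rewrite rsum_scal. fold S.
      apply Rmult_le_reg_l with (Rmax 1 S); [lra|].
      rewrite <- Rmult_assoc, Rinv_r by lra. lra.
Qed.

Lemma box_retract_onto m w lam sigma c a v : (0 < m)%nat ->
  dual_feasible m a -> subsimplex m v ->
  exists z, box (m * m + m) z /\ box_Dobj m w lam sigma c z = Dobj m w lam sigma c a v.
Proof.
  intros Hm Ha [Hv Hv1].
  exists (fun k => if Nat.ltb k (m * m) then a (k / m)%nat (k mod m)%nat else v (k - m * m)%nat).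
  assert (Hdiv : forall i j, (j < m)%nat -> ((i * m + j) / m = i /\ (i * m + j) mod m = j)%nat).
  { intros i j Hj. split; symmetry;
      [apply (Nat.div_unique _ _ _ j) | apply (Nat.mod_unique _ _ i j)]; lia. }
  split.
  - intros k Hk. destruct (Nat.ltb k (m * m)) eqn:E.
    + apply Nat.ltb_lt in E.
      assert (k / m < m)%nat by (apply Nat.Div0.div_lt_upper_bound; lia).
      assert (k mod m < m)%nat by (apply Nat.mod_upper_bound; lia).
      destruct (Ha (k / m)%nat (k mod m)%nat H H0) as [Habs _].
      unfold Rabs in Habs; destruct Rcase_abs; lra.
    + apply Nat.ltb_ge in E.
      assert (0 <= v (k - m * m)%nat) by (apply Hv; lia).
      assert (v (k - m * m)%nat <= rsum m v) by (apply rsum_ge_term; [exact Hv | lia]). lra.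
  - apply Dobj_ext.
    + intros i j Hi Hj. unfold antisym_part.
      destruct (Hdiv i j Hj) as [E1 E2], (Hdiv j i Hi) as [E3 E4].
      assert (L1 : Nat.ltb (i * m + j) (m * m) = true) by (apply Nat.ltb_lt; nia).
      assert (L2 : Nat.ltb (j * m + i) (m * m) = true) by (apply Nat.ltb_lt; nia).
      rewrite L1, L2, E1, E2, E3, E4. destruct (Ha i j Hi Hj) as [_ Hanti]. rewrite Hanti. field.
    + intros i Hi. unfold subsimplex_part.
      assert (L : forall k, (k < m)%nat -> Nat.ltb (m * m + k) (m * m) = false)
        by (intros; apply Nat.ltb_ge; lia).
      assert (S : forall k, (m * m + k - m * m = k)%nat) by (intros; lia).
      rewrite L, S by exact Hi.
      rewrite (rsum_ext m _ v).
      * rewrite Rmax_left, Rabs_pos_eq by (exact Hv1 || apply Hv, Hi). field.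
      * intros k Hk. rewrite L, S by exact Hk. apply Rabs_pos_eq, Hv, Hk.
Qed.

Lemma Dobj_antitone_v m w lam sigma c a v v' : 0 <= sigma ->
  (forall i, (i < m)%nat -> v i <= v' i) ->
  Dobj m w lam sigma c a v' <= Dobj m w lam sigma c a v.
Proof.
  intros Hsigma Hv. rewrite !Dobj_E. apply Rmult_le_compat_l; [lra|].
  apply rsum_le; intros i Hi. specialize (Hv i Hi). unfold dual_grad.
  assert (sigma * v i <= sigma * v' i) by (apply Rmult_le_compat_l; assumption).
  unfold Rmax. destruct Rle_dec, Rle_dec; nra.
Qed.

(* A minimizer over the subsimplex, pushed onto the simplex by adding the slack to [v 0]. *)
Lemma dual_min_exists m w lam sigma c : (0 < m)%nat -> 0 <= sigma ->
  exists a v, dual_min m w lam sigma c a v.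
Proof.
  intros Hm Hsigma.
  destruct (box_min_exists _ _ (box_Dobj_continuous m w lam sigma c)
              (box_Dobj_ext m w lam sigma c)) as [z0 [Hz0 Hmin]].
  destruct (box_retract_feasible m z0 Hz0) as [Ha [Hv Hv1]].
  set (a := antisym_part m z0). set (v := subsimplex_part m z0) in *.
  set (v0 := fun i => v i + (if Nat.eq_dec i 0 then 1 - rsum m v else 0)).
  exists a, v0. split; [exact Ha|]. split.
  - split.
    + intros i Hi. unfold v0. specialize (Hv i Hi). destruct Nat.eq_dec; lra.
    + unfold v0. rewrite rsum_plus, rsum_delta by exact Hm. ring.
  - intros a' v' Ha' [Hv' Hv1'].
    destruct (box_retract_onto m w lam sigma c a' v' Hm Ha' (conj Hv' (Req_le _ _ Hv1')))
      as [z [Hz Hze]].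
    rewrite <- Hze. eapply Rle_trans; [|apply Hmin, Hz].
    apply Dobj_antitone_v; [exact Hsigma|].
    intros i _. fold v. unfold v0. destruct Nat.eq_dec; lra.
Qed.

Theorem mainTheorem6 (m : nat) (w : nat -> nat -> R) (lam sigma : R) (c : nat -> R)
  (Hm : (0 < m)%nat)
  (Hsym : forall i j, (i < m)%nat -> (j < m)%nat -> w i j = w j i)
  (Hwnn : forall i j, (i < m)%nat -> (j < m)%nat -> 0 <= w i j)
  (Hlam : 0 <= lam) (Hsigma : 0 <= sigma) :
  (exists u0, nonneg_vec m u0 /\
     (forall u, nonneg_vec m u -> Gobj m w lam sigma c u0 <= Gobj m w lam sigma c u) /\
   exists a0 v0, dual_feasible m a0 /\ simplex m v0 /\
     (forall a v, dual_feasible m a -> simplex m v ->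
        Dobj m w lam sigma c a0 v0 <= Dobj m w lam sigma c a v) /\
     Gobj m w lam sigma c u0 = - Dobj m w lam sigma c a0 v0)
  /\
  (forall a0 v0, dual_feasible m a0 -> simplex m v0 ->
     (forall a v, dual_feasible m a -> simplex m v ->
        Dobj m w lam sigma c a0 v0 <= Dobj m w lam sigma c a v) ->
     let us := dual_point m w lam sigma c a0 v0 in
     (nonneg_vec m us /\
      (forall u, nonneg_vec m u -> Gobj m w lam sigma c us <= Gobj m w lam sigma c u) /\
      (forall u, nonneg_vec m u ->
         (forall u', nonneg_vec m u' -> Gobj m w lam sigma c u <= Gobj m w lam sigma c u') ->
         forall i, (i < m)%nat -> u i = us i)) /\
     ((exists i, (i < m)%nat /\ us i <> 0) ->
        ball_min m w lam sigma c (fun i => us i / norm2 m us)) /\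
     ((forall i, (i < m)%nat -> us i = 0) ->
        ball_min m w lam sigma c (fun _ => 0))).
Proof.
  split.
  - destruct (dual_min_exists m w lam sigma c Hm Hsigma) as [a0 [v0 Hmin]].
    destruct (dual_min_primal_min m w lam sigma c Hsym Hwnn Hlam Hsigma a0 v0 Hm Hmin)
      as [Hus Husmin].
    exists (dual_point m w lam sigma c a0 v0). split; [exact Hus|]. split; [exact Husmin|].
    pose proof (dual_min_strong_duality m w lam sigma c Hsym Hwnn Hlam Hsigma a0 v0 Hm Hmin)
      as Hstrong.
    destruct Hmin as [Ha0 [Hv0 Hmin]].
    exists a0, v0. exact (conj Ha0 (conj Hv0 (conj Hmin Hstrong))).
  - intros a0 v0 Ha0 Hv0 Hmin0 us.
    assert (Hmin : dual_min m w lam sigma c a0 v0) by exact (conj Ha0 (conj Hv0 Hmin0)).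
    pose proof (dual_min_primal_min m w lam sigma c Hsym Hwnn Hlam Hsigma a0 v0 Hm Hmin) as Hprimal.
    split; [|split].
    + destruct Hprimal as [Hus Husmin]. split; [exact Hus|]. split; [exact Husmin|].
      intros u Hu Humin.
      exact (primal_min_unique m w lam sigma c Hsym Hwnn Hlam Hsigma a0 v0 u Hm Hmin (conj Hu Humin)).
    + intros Hnz. apply ball_min_normalized; [exact Hprimal | apply norm2_pos, Hnz].
    + intros Hz. apply (ball_min_zero m w lam sigma c us); [exact Hprimal | apply norm2_eq0, Hz].
Qed.
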